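(* For $n\ge 1$ and $1\le k\le n$, the number of parking functions $\pi\in\mathrm{PF}_n$ with $\pi_1=k$ equals $$\sum_{s=0}^{n-k}\binom{n-1}{s}(s+1)^{s-1}(n-s)^{n-s-2}.$$
   Context: A parking function of length $n$ is a sequence $(\pi_1,\dots,\pi_n)$ with $1\le\pi_i\le n$ such that $\#\{t:\pi_t\le i\}\ge i$ for all $1\le i\le n$; $\mathrm{PF}_n$ denotes the set of these. (Here $0^{-1}$ does not occur; for $s=n-1$ the factor $(n-s)^{n-s-2}=1^{-1}=1$.) *)

From HB Require Import structures.
From mathcomp Require Import all_boot all_order all_algebra.
Set Implicit Arguments. Unset Strict Implicit. Unset Printing Implicit Defensive.

(* We represent a candidate as an n-tuple of elements of 'I_n.+1 (values 0..n),
   so the constraint 1 <= pi_t is stated explicitly. pi_1 is the head (index 0). *)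
Definition is_parking_function (n : nat) (p : n.-tuple 'I_n.+1) : bool :=
  all (fun x : 'I_n.+1 => 1 <= x) p &&
  [forall i : 'I_n.+1, (1 <= i) ==> (i <= count (fun x : 'I_n.+1 => x <= i) p)].

Definition PF (n : nat) : {set n.-tuple 'I_n.+1} :=
  [set p | is_parking_function p].

Definition pf_first (n : nat) (p : n.-tuple 'I_n.+1) : nat :=
  nth 0%N (map (@nat_of_ord n.+1) p) 0.

From HB Require Import structures.
From mathcomp Require Import all_boot all_order all_algebra.
From mathcomp Require Import zify.
Import GRing.Theory Num.Theory.
Set Implicit Arguments. Unset Strict Implicit. Unset Printing Implicit Defensive.

(* By Pollak's cycle argument, exactly one of the m+1 rotations
   x |-> x + d (mod m+1) of a sequence in [0,m]^m is a parking function, so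
   there are (m+1)^(m-1) of them.  A sequence k :: u parks iff for a unique
   breakpoint r >= k-1 exactly r entries of u are at most r, these entries form
   a parking function of length r, and the others, lowered by r+1, form one of
   length n-1-r.  Choosing the positions of the small entries contributes
   C(n-1, r), and summing over s = n-1-r gives the formula. *)

Definition sum_seqs (B N : nat) (w : seq nat -> nat) : nat :=
  \sum_(t : N.-tuple 'I_B) w (map val t).

Lemma sum_seqs0 B w : sum_seqs B 0 w = w [::].
Proof.
rewrite /sum_seqs (big_pred1 [tuple]) // => t.
by apply/esym/eqP; rewrite [t]tuple0.
Qed.

Lemma sum_seqsS B N w :
  sum_seqs B N.+1 w = \sum_(x < B) sum_seqs B N (fun s => w (val x :: s)).
Proof.
rewrite /sum_seqs (reindex (fun p : 'I_B * N.-tuple 'I_B => cons_tuple p.1 p.2)) /=.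
  exact: (esym (pair_big xpredT xpredT (fun x t => w (map val (cons_tuple x t))))).
exists (fun t : N.+1.-tuple 'I_B => (thead t, behead_tuple t)).
  by move=> [x t] _ /=; congr pair; apply: val_inj.
by move=> t _ /=; rewrite [in RHS](tuple_eta t).
Qed.

Lemma eq_sum_seqs B N w1 w2 :
  (forall s, size s = N -> all (fun x => x < B) s -> w1 s = w2 s) ->
  sum_seqs B N w1 = sum_seqs B N w2.
Proof.
move=> eq_w; apply: eq_bigr => t _; apply: eq_w; first by rewrite size_map size_tuple.
by apply/allP => x /mapP [y _ ->]; exact: ltn_ord.
Qed.

Lemma sum_seqs_sum B N (I : Type) (r : seq I) (P : pred I) (w : I -> seq nat -> nat) :
  sum_seqs B N (fun s => \sum_(i <- r | P i) w i s) = \sum_(i <- r | P i) sum_seqs B N (w i).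
Proof. exact: exchange_big. Qed.

Lemma sum_seqs_const B N c : sum_seqs B N (fun _ => c) = B ^ N * c.
Proof. by rewrite /sum_seqs sum_nat_const card_tuple card_ord. Qed.

Lemma sum_seqs_eq0 B N w :
  (forall s, size s = N -> all (fun x => x < B) s -> w s = 0) -> sum_seqs B N w = 0.
Proof.
by move=> w0; rewrite (eq_sum_seqs (w2 := fun _ => 0)) // sum_seqs_const muln0.
Qed.

Lemma sum_seqs_narrow B B' N w : B' <= B ->
  (forall s, size s = N -> all (fun x => x < B) s -> w s != 0 -> all (fun x => x < B') s) ->
  sum_seqs B N w = sum_seqs B' N w.
Proof.
move=> leB'B; elim: N w => [|N IH] w supp_w; first by rewrite !sum_seqs0.
rewrite !sum_seqsS (big_ord_widen B (fun x => sum_seqs B' N (fun s => w (x :: s))) leB'B).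
rewrite [RHS]big_mkcond; apply: eq_bigr => x _.
have supp_x s : size s = N -> all (fun x => x < B) s -> w (val x :: s) != 0 ->
    (x < B') && all (fun x => x < B') s.
  by move=> sz lt_s; apply: supp_w; rewrite /= ?sz ?ltn_ord.
case: ifP => ltxB'.
  by apply: IH => s sz lt_s /(supp_x s sz lt_s) /andP[].
apply: sum_seqs_eq0 => s sz lt_s; apply/eqP; apply: contraFT ltxB'.
by move/(supp_x s sz lt_s) => /andP[].
Qed.

Lemma sum_seqs_shift c B N w :
  sum_seqs (c + B) N (fun s => all (fun x => c <= x) s * w (map (subn^~ c) s)) =
  sum_seqs B N w.
Proof.
elim: N w => [|N IH] w; first by rewrite !sum_seqs0 /= mul1n.
rewrite !sum_seqsS big_split_ord /= big1 ?add0n => [|i _]; last first.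
  by apply: sum_seqs_eq0 => s _ _ /=; rewrite leqNgt ltn_ord.
apply: eq_bigr => i _; rewrite -IH; apply: eq_sum_seqs => s _ _ /=.
by rewrite leq_addr addKn.
Qed.

Lemma sum_seqs_perm B N (f : nat -> nat) w :
  (forall x, x < B -> f x < B) ->
  (forall x y, x < B -> y < B -> f x = f y -> x = y) ->
  sum_seqs B N (fun s => w (map f s)) = sum_seqs B N w.
Proof.
move=> f_lt f_inj; elim: N w => [|N IH] w; first by rewrite !sum_seqs0.
rewrite !sum_seqsS.
pose g (x : 'I_B) : 'I_B := Ordinal (f_lt x (ltn_ord x)).
have g_inj : injective g.
  by move=> x y /(congr1 val) /f_inj eq_xy; apply/val_inj/eq_xy.
rewrite [RHS](reindex_inj g_inj); apply: eq_bigr => x _.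
exact: IH (fun s => w (f x :: s)).
Qed.

Lemma binomial_convolutionS N (a b : nat -> nat) :
  \sum_(j < N.+2) 'C(N.+1, j) * a j * b (N.+1 - j) =
  \sum_(j < N.+1) 'C(N, j) * a j.+1 * b (N - j) +
  \sum_(j < N.+1) 'C(N, j) * a j * b (N - j).+1.
Proof.
rewrite big_ord_recl /=.
under eq_bigr => i _ do rewrite binS mulnDl mulnDl subSS /bump /= add1n.
rewrite big_split /=.
have shift_low : \sum_(j < N.+1) 'C(N, j) * a j * b (N - j).+1 =
    'C(N, 0) * a 0 * b N.+1 + \sum_(i < N) 'C(N, i.+1) * a i.+1 * b (N - i).
  rewrite big_ord_recl /= subn0; congr (_ + _).
  by apply: eq_bigr => i _; rewrite /bump /= add1n subnSK ?ltn_ord.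
have drop_top : \sum_(i < N.+1) 'C(N, i.+1) * a i.+1 * b (N - i) =
    \sum_(i < N) 'C(N, i.+1) * a i.+1 * b (N - i).
  by rewrite big_ord_recr /= bin_small // !mul0n addn0.
rewrite shift_low drop_top subn0 !bin0; lia.
Qed.

Section SplitAtThreshold.
Variables (B c : nat).

Definition low_sum (X : seq nat -> nat) j :=
  sum_seqs B j (fun u => all (fun x => x <= c) u * X u).
Definition high_sum (Y : seq nat -> nat) j :=
  sum_seqs B j (fun v => all (fun x => c < x) v * Y v).

Lemma low_sumS X j :
  low_sum X j.+1 = \sum_(x < B | x <= c) low_sum (fun u => X (val x :: u)) j.
Proof.
rewrite /low_sum sum_seqsS [RHS]big_mkcond; apply: eq_bigr => x _ /=.
by case: ifP => //= _; apply: sum_seqs_eq0 => s _ _; rewrite mul0n.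
Qed.

Lemma high_sumS Y j :
  high_sum Y j.+1 = \sum_(x < B | ~~ (x <= c)) high_sum (fun u => Y (val x :: u)) j.
Proof.
rewrite /high_sum sum_seqsS [RHS]big_mkcond; apply: eq_bigr => x _ /=.
by rewrite ltnNge; case: ifP => //= _; apply: sum_seqs_eq0 => s _ _; rewrite mul0n.
Qed.

Lemma sum_seqs_filter_split N (X Y : seq nat -> nat) :
  sum_seqs B N (fun s => X [seq x <- s | x <= c] * Y [seq x <- s | c < x]) =
  \sum_(j < N.+1) 'C(N, j) * low_sum X j * high_sum Y (N - j).
Proof.
elim: N X Y => [|N IH] X Y.
  by rewrite sum_seqs0 big_ord1 /low_sum /high_sum !sum_seqs0 /= bin0 !mul1n.
rewrite sum_seqsS (bigID (fun x : 'I_B => x <= c)) /= binomial_convolutionS.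
have -> : \sum_(i < B | i <= c) sum_seqs B N (fun s =>
      X [seq x <- val i :: s | x <= c] * Y [seq x <- val i :: s | c < x]) =
    \sum_(i < B | i <= c) \sum_(j < N.+1)
      'C(N, j) * low_sum (fun u => X (val i :: u)) j * high_sum Y (N - j).
  apply: eq_bigr => i le_ic; rewrite -IH; apply: eq_sum_seqs => s _ _ /=.
  by rewrite le_ic ltnNge le_ic.
have -> : \sum_(i < B | ~~ (i <= c)) sum_seqs B N (fun s =>
      X [seq x <- val i :: s | x <= c] * Y [seq x <- val i :: s | c < x]) =
    \sum_(i < B | ~~ (i <= c)) \sum_(j < N.+1)
      'C(N, j) * low_sum X j * high_sum (fun u => Y (val i :: u)) (N - j).
  apply: eq_bigr => i gt_ic; rewrite -IH; apply: eq_sum_seqs => s _ _ /=.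
  by rewrite (negbTE gt_ic) ltnNge gt_ic.
rewrite [X in X + _ = _]exchange_big [X in _ + X = _]exchange_big /=.
congr (_ + _); apply: eq_bigr => j _.
  by rewrite low_sumS -mulnA big_distrl big_distrr /=; apply: eq_bigr => i _; rewrite mulnA.
by rewrite high_sumS -big_distrr.
Qed.

End SplitAtThreshold.

Ltac case_leq := repeat match goal with |- context [leq ?a ?b] => case: (leqP a b) => ? end.

Definition count_lt (u : seq nat) z := count (fun x => x < z) u.

Lemma count_lt0 u : count_lt u 0 = 0.
Proof. by rewrite /count_lt (eq_count (a2 := pred0)) ?count_pred0. Qed.

Lemma count_lt_mono u : {homo count_lt u : a b / a <= b}.
Proof. by move=> a b le_ab; apply: sub_count => x /=; lia. Qed.

Lemma count_lt_all u B z : all (fun x => x < B) u -> B <= z -> count_lt u z = size u.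
Proof.
move=> /allP lt_uB le_Bz; apply/eqP; rewrite -all_count; apply/allP => x /lt_uB; lia.
Qed.

Lemma count_interval a b u :
  count (fun x => a < x <= b) u = count_lt u b.+1 - count_lt u a.+1.
Proof.
rewrite /count_lt; case: (leqP a b) => le_ab.
  have -> : count (fun x => x < b.+1) u =
      count (fun x => x < a.+1) u + count (fun x => a < x <= b) u.
    by elim: u => //= x u ->; case_leq; lia.
  by rewrite addKn.
rewrite (eq_count (a2 := pred0)) ?count_pred0; last by move=> x /=; case_leq; lia.
by apply/esym/eqP; rewrite subn_eq0; apply: sub_count => x /=; lia.
Qed.

Definition parking (m : nat) (u : seq nat) : bool :=
  (size u == m) && all (fun i => i <= count (fun x => 0 < x <= i) u) (iota 1 m).

Lemma parkingP m u :
  reflect (size u = m /\ forall i, 0 < i <= m -> i <= count (fun x => 0 < x <= i) u)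
          (parking m u).
Proof.
apply: (iffP andP) => [[/eqP sz /allP park]|[sz park]]; split => //.
- by move=> i hi; apply: park; rewrite mem_iota; lia.
- by apply/eqP.
- by apply/allP => i; rewrite mem_iota => hi; apply: park; lia.
Qed.

Lemma parking_gt0 m u : parking m u -> all (fun x => 0 < x) u.
Proof.
case/parkingP => sz park; case: m sz park => [|m] sz park; first by case: u {park} sz.
have le_size : size u <= count (fun x => 0 < x <= m.+1) u.
  by rewrite sz; apply: park; rewrite /= leqnn.
have := count_size (fun x => 0 < x <= m.+1) u.
rewrite leq_eqVlt ltnNge le_size orbF -all_count => /allP in_range.
by apply/allP => x /in_range /andP[].
Qed.

Definition shift_mod L d x := (x + d) %% L.

Definition opp_mod L d := if d == 0 then 0 else L - d.

Lemma opp_mod_lt L d : d < L -> opp_mod L d < L.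
Proof. by rewrite /opp_mod; case: eqP; lia. Qed.

Lemma opp_modK L d : d < L -> opp_mod L (opp_mod L d) = d.
Proof. by rewrite /opp_mod; do 2 case: eqP; lia. Qed.

Lemma count_shift_mod L d i u : d < L -> i < L -> all (fun x => x < L) u ->
  count (fun x => 0 < x <= i) (map (shift_mod L d) u) =
  count (fun x => opp_mod L d < x <= opp_mod L d + i) u +
  count_lt u ((opp_mod L d + i).+1 - L).
Proof.
move=> ltdL ltiL; rewrite count_map /opp_mod /count_lt.
elim: u => //= x u IH /andP [ltxL lt_uL]; rewrite IH // /shift_mod.
case: eqP => [->|nz_d].
  by rewrite addn0 modn_small //; case_leq; lia.
case: (ltnP (x + d) L) => ltxdL.
  by rewrite modn_small //; case_leq; lia.
have -> : (x + d) %% L = x + d - L.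
  by rewrite -{1}(subnK ltxdL) modnDr modn_small //; lia.
by case_leq; lia.
Qed.

(* p is the leftmost minimiser of z |-> C z - z on [1, m+1]. *)
Definition first_argmin (C : nat -> nat) m p :=
  (forall x, p < x <= m.+1 -> C p + x <= C x + p) /\
  (forall y, 0 < y < p -> C p + y < C y + p).

Lemma first_argmin_uniq C m p1 p2 : 0 < p1 <= m.+1 -> 0 < p2 <= m.+1 ->
  first_argmin C m p1 -> first_argmin C m p2 -> p1 = p2.
Proof.
move=> p1_in p2_in [ge1 gt1] [ge2 gt2].
case: (ltngtP p1 p2) => // lt_p.
  by have := ge1 p2 ltac:(lia); have := gt2 p1 ltac:(lia); lia.
by have := ge2 p1 ltac:(lia); have := gt1 p2 ltac:(lia); lia.
Qed.

Lemma first_argmin_exists C m : exists2 p, 0 < p <= m.+1 & first_argmin C m p.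
Proof.
pose v z := C z + (m.+1 - z).
have has_value : exists k, has (fun z => v z == k) (iota 1 m.+1).
  by exists (v 1); apply/hasP; exists 1 => //; rewrite mem_iota; lia.
case: (ex_minnP has_value) => vmin /hasP [z0 z0_in /eqP v_z0] vmin_le.
have v_ge z : 0 < z <= m.+1 -> vmin <= v z.
  by move=> z_in; apply: vmin_le; apply/hasP; exists z; rewrite ?mem_iota; lia.
have attained : exists z, (0 < z <= m.+1) && (v z == vmin).
  by exists z0; move: z0_in; rewrite mem_iota v_z0 eqxx andbT; lia.
case: (ex_minnP attained) => p /andP [p_in /eqP v_p] p_first.
exists p => //; split.
  by move=> x x_in; have := v_ge x ltac:(lia); rewrite -v_p /v; lia.
move=> y y_in; have := v_ge y ltac:(lia); case: (eqVneq (v y) vmin) => [v_y | ].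
  by have := p_first y; rewrite v_y eqxx andbT; lia.
by rewrite -v_p /v; lia.
Qed.

Lemma parking_shift_mod_iff m u d : size u = m -> all (fun x => x < m.+1) u -> d < m.+1 ->
  parking m (map (shift_mod m.+1 d) u) <-> first_argmin (count_lt u) m (opp_mod m.+1 d).+1.
Proof.
move=> sz lt_u lt_d; set q := opp_mod m.+1 d.
have le_qm : q <= m by rewrite -ltnS opp_mod_lt.
have C_top z : m.+1 <= z -> count_lt u z = m by move=> ?; rewrite (count_lt_all lt_u).
have C_le z : count_lt u z <= m by rewrite -sz count_size.
have park_iff : parking m (map (shift_mod m.+1 d) u) <->
    forall i, 0 < i <= m -> i <= count_lt u (q + i).+1 - count_lt u q.+1 +
                               count_lt u ((q + i).+1 - m.+1).
  split => [/parkingP [_ park] i hi | park].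
    by have := park i hi; rewrite count_shift_mod // -?count_interval //; lia.
  apply/parkingP; rewrite size_map; split => // i hi.
  by rewrite count_shift_mod ?count_interval //; [apply: park | lia].
rewrite park_iff; split => [park | [ge gt] i hi].
  split.
    move=> x x_in; have := park (x - q.+1) ltac:(lia).
    have -> : (q + (x - q.+1)).+1 = x by lia.
    have -> : x - m.+1 = 0 by lia.
    by rewrite count_lt0; lia.
  move=> y y_in; have := park (y + m - q) ltac:(lia).
  have -> : (q + (y + m - q)).+1 = y + m.+1 by lia.
  rewrite addnK C_top ?leq_addl //.
  by have := C_le q.+1; lia.
case: (leqP (q + i).+1 m.+1) => le_qi.
  by have := ge (q + i).+1 ltac:(lia); rewrite (_ : (q + i).+1 - m.+1 = 0) ?count_lt0; lia.
have := gt ((q + i).+1 - m.+1) ltac:(lia).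
by rewrite (C_top (q + i).+1); have := C_le q.+1; lia.
Qed.

Lemma cycle_lemma m u : size u = m -> all (fun x => x < m.+1) u ->
  \sum_(d < m.+1) parking m (map (shift_mod m.+1 d) u) = 1.
Proof.
move=> sz lt_u; have [p p_in p_min] := first_argmin_exists (count_lt u) m.
have shift_iff (d : 'I_m.+1) := parking_shift_mod_iff sz lt_u (ltn_ord d).
have lt_d0 : opp_mod m.+1 p.-1 < m.+1 by apply: opp_mod_lt; lia.
have opp_d0 : (opp_mod m.+1 (opp_mod m.+1 p.-1)).+1 = p by rewrite opp_modK; lia.
rewrite (bigD1 (Ordinal lt_d0)) //= big1 ?addn0 => [|d ne_d].
  by have /iffRL := shift_iff (Ordinal lt_d0); rewrite /= opp_d0 => /(_ p_min) ->.
apply/eqP; rewrite eqb0; apply/negP => /shift_iff d_min.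
have := opp_mod_lt (ltn_ord d); rewrite ltnS => le_opp.
have /(congr1 (opp_mod m.+1)) : opp_mod m.+1 d = opp_mod m.+1 (opp_mod m.+1 p.-1).
  by apply/eq_add_S; rewrite opp_d0; apply: first_argmin_uniq d_min p_min => //; lia.
by rewrite !opp_modK // => d_eq; rewrite -val_eqE /= d_eq eqxx in ne_d.
Qed.

Definition npark m := sum_seqs m.+1 m (parking m).

Lemma npark_cycle m : m.+1 * npark m = m.+1 ^ m.
Proof.
have rot_inv d : sum_seqs m.+1 m (fun u => parking m (map (shift_mod m.+1 d) u)) = npark m.
  apply: sum_seqs_perm => [x _ | x y lt_x lt_y]; first by rewrite /shift_mod ltn_mod.
  by move/eqP; rewrite /shift_mod eqn_modDr !modn_small // => /eqP.
have <- : \sum_(d < m.+1) sum_seqs m.+1 m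
    (fun u => parking m (map (shift_mod m.+1 d) u)) = m.+1 * npark m.
  by under eq_bigr => d _ do rewrite rot_inv; rewrite sum_nat_const card_ord.
rewrite -sum_seqs_sum (eq_sum_seqs (w2 := fun _ => 1)) ?sum_seqs_const ?muln1 //.
by move=> u sz lt_u; apply: cycle_lemma.
Qed.

Lemma npark_ratE m : ((npark m)%:R = (m.+1)%:R ^ (m%:Z - 1) :> rat)%R.
Proof.
have := npark_cycle m; case: m => [|m].
  by rewrite mul1n expn0 exp1rz => ->.
rewrite expnS => /eqP; rewrite eqn_pmul2l // => /eqP ->.
have -> : (m.+1%:Z - 1 = m%:Z)%R by rewrite -addn1 PoszD addrK.
by rewrite natrX.
Qed.

Section FirstEntry.
Variables (N k : nat) (C : nat -> nat).

(* Read with C := count_lt u: the parking condition of k :: u, and the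
   splitting of u at the breakpoint s into its s entries <= s and the rest. *)
Definition first_parks :=
  forall i, 0 < i <= N.+1 -> i <= (k <= i) + (C i.+1 - C 1).

Definition breaks_at s :=
  [/\ C s.+1 = s, forall i, 0 < i <= s -> i <= C i.+1 - C 1
    & forall i, 0 < i <= N - s -> i <= C (s.+1 + i).+1 - C s.+2].

Lemma breaks_at_C1 s : breaks_at s -> C 1 = 0.
Proof. by case: s => [[]|s [C_s low _]] //; have := low s.+1 ltac:(lia); lia. Qed.

Hypothesis C_mono : {homo C : a b / a <= b}.

Lemma breaks_at_first_parks s : s <= N -> k <= s.+1 -> breaks_at s -> first_parks.
Proof.
move=> le_sN le_ks br i i_in; have C1 := breaks_at_C1 br; case: br => [C_s low high].
have := C_mono (leqnSn s.+1); rewrite C1 subn0.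
case: (leqP i s) => [le_is | lt_si]; first by have := low i ltac:(lia); lia.
case: (eqVneq i s.+1) => [-> | ne_is]; first by lia.
have := high (i - s.+1) ltac:(lia).
by rewrite (_ : (s.+1 + (i - s.+1)).+1 = i.+1); lia.
Qed.

Hypothesis C_top : C N.+2 = N.

Lemma breaks_at_uniq s1 s2 : s1 <= N -> s2 <= N -> breaks_at s1 -> breaks_at s2 -> s1 = s2.
Proof.
wlog le_s12 : s1 s2 / s1 <= s2.
  move=> W le1 le2 br1 br2; case: (leqP s1 s2) => [|/ltnW] le; first exact: W.
  exact/esym/W.
move=> le1 le2 br1 br2; have C1 := breaks_at_C1 br1.
case: (eqVneq s1 s2) => // ne_s; case: br1 br2 => [C_s1 _ high1] [C_s2 low2 _].
have := low2 s1.+1 ltac:(lia); have := high1 (N - s1) ltac:(lia).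
by rewrite (_ : (s1.+1 + (N - s1)).+1 = N.+2) ?C_top ?C1; lia.
Qed.

Lemma first_parks_breaks_at : 0 < k <= N.+1 -> first_parks ->
  exists s, [/\ s <= N, k <= s.+1 & breaks_at s].
Proof.
move=> k_in park.
have C1 : C 1 = 0.
  have := C_mono (isT : 1 <= N.+2); have := park N.+1 ltac:(lia).
  by rewrite C_top (_ : k <= N.+1) /=; lia.
have [s C_s s_first] := ex_minnP (ex_intro (fun i => C i.+2 == i) N (introT eqP C_top)).
have le_sN : s <= N by apply: s_first; rewrite C_top.
have low i : 0 < i <= s -> i <= C i.+1.
  move=> i_in; have := park i ltac:(lia).
  have : C i.+1 != i.-1.
    by apply/negP => /eqP C_i; have := s_first i.-1; rewrite prednK ?C_i ?eqxx; lia.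
  lia.
have C_s1 : C s.+1 = s.
  have := C_mono (leqnSn s.+1); rewrite (eqP C_s).
  case: (posnP s) => [-> | s_gt0]; first by rewrite C1.
  by have := low s ltac:(lia); lia.
have le_ks : k <= s.+1.
  by case: (leqP k s.+1) => // lt_sk; have := park s.+1 ltac:(lia); rewrite C1; case: leqP; lia.
exists s; split => //; split => // [i i_in | i i_in]; first by rewrite C1 subn0 low.
have := park (s.+1 + i) ltac:(lia); move: C_s => /eqP ->.
by rewrite C1; case: (leqP k (s.+1 + i)) => _; lia.
Qed.

End FirstEntry.

Lemma parking_cons_first_parks N k u : 0 < k -> size u = N ->
  parking N.+1 (k :: u) <-> first_parks N k (count_lt u).
Proof.
move=> k_gt0 sz; rewrite /first_parks; split => [/parkingP [_ park] i i_in | park].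
  by have := park i i_in; rewrite /= count_interval; case: (leqP k i); lia.
apply/parkingP; split => [|i i_in]; first by rewrite /= sz.
by have := park i i_in; rewrite /= count_interval; case: (leqP k i); lia.
Qed.

Definition split_parks s m (u : seq nat) : bool :=
  parking s [seq x <- u | x <= s] && parking m [seq x - s.+1 | x <- u & s < x].

Lemma split_parks_breaks_at N s m u : size u = N -> s + m = N ->
  split_parks s m u <-> breaks_at N (count_lt u) s.
Proof.
move=> sz def_N; have C_le : count_lt u s.+1 <= N by rewrite -sz count_size.
have sz_low : size [seq x <- u | x <= s] = count_lt u s.+1 by rewrite size_filter.
have sz_high : size [seq x - s.+1 | x <- u & s < x] = N - count_lt u s.+1.
  rewrite size_map size_filter -sz -(count_predC (fun x => x < s.+1) u) addKn.
  by apply: eq_count => x /=; rewrite -leqNgt.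
have count_low i : i <= s ->
    count (fun x => 0 < x <= i) [seq x <- u | x <= s] = count_lt u i.+1 - count_lt u 1.
  by move=> le_is; rewrite count_filter -count_interval; apply: eq_count => x /=; case_leq; lia.
have count_high i : count (fun x => 0 < x <= i) [seq x - s.+1 | x <- u & s < x] =
    count_lt u (s.+1 + i).+1 - count_lt u s.+2.
  rewrite count_map count_filter -count_interval.
  by apply: eq_count => x /=; case_leq; lia.
split.
  case/andP => /parkingP [sz_s low] /parkingP [_ high]; split.
  - by rewrite -sz_low.
  - by move=> i i_in; rewrite -count_low; [apply: low | lia].
  - by move=> i i_in; rewrite -count_high; apply: high; lia.
case=> C_s low high; apply/andP; split; apply/parkingP; split.
- by rewrite sz_low.
- by move=> i i_in; rewrite count_low; [apply: low | lia].
- by rewrite sz_high; lia.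
- by move=> i i_in; rewrite count_high; apply: high; lia.
Qed.

Lemma parking_cons_split N k u : 0 < k <= N.+1 -> size u = N -> all (fun x => x < N.+2) u ->
  parking N.+1 (k :: u) = \sum_(t < (N.+1 - k).+1) split_parks (N - t) t u :> nat.
Proof.
move=> k_in sz lt_u.
have C_top : count_lt u N.+2 = N by rewrite (count_lt_all lt_u).
have t_split (t : 'I_(N.+1 - k).+1) :
    split_parks (N - t) t u <-> breaks_at N (count_lt u) (N - t).
  by apply: split_parks_breaks_at => //; rewrite subnK //; have := ltn_ord t; lia.
have first_iff := parking_cons_first_parks (proj1 (andP k_in)) sz.
case: (boolP (parking N.+1 (k :: u))) => [park | not_park]; last first.
  rewrite big1 // => t _; apply/eqP; rewrite eqb0; apply/negP => /t_split br.
  apply: (negP not_park); apply/first_iff.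
  by apply: (breaks_at_first_parks (count_lt_mono u) _ _ br); have := ltn_ord t; lia.
have [|s [le_sN le_ks br]] := first_parks_breaks_at (count_lt_mono u) C_top k_in.
  exact/first_iff.
have lt_Ns : N - s < (N.+1 - k).+1 by lia.
rewrite (bigD1 (Ordinal lt_Ns)) //= big1 ?addn0 => [|t ne_t].
  by rewrite (proj2 (t_split (Ordinal lt_Ns))) //= subKn.
apply/eqP; rewrite eqb0; apply/negP => /t_split br_t.
have := breaks_at_uniq C_top (leq_subr t N) le_sN br_t br.
by move: ne_t; rewrite -val_eqE /=; have := ltn_ord t; lia.
Qed.

Lemma sum_seqs_split_parks N s m : s + m = N ->
  sum_seqs N.+2 N (fun u => split_parks s m u) = 'C(N, s) * npark s * npark m.
Proof.
move=> def_N.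
rewrite (eq_sum_seqs (w2 := fun u => parking s [seq x <- u | x <= s] *
    parking m [seq x - s.+1 | x <- [seq x <- u | s < x]])); last by move=> *; rewrite mulnb.
rewrite (sum_seqs_filter_split N.+2 s N (parking s) (fun v => parking m [seq x - s.+1 | x <- v])).
have lt_sN : s < N.+1 by lia.
rewrite (bigD1 (Ordinal lt_sN)) //= big1 ?addn0 => [|j ne_j]; last first.
  rewrite /low_sum sum_seqs_eq0 ?muln0 ?mul0n // => v sz_v _.
  by rewrite /parking sz_v (_ : (j == s :> nat) = false) ?muln0 //; apply/negbTE.
have -> : N - s = m by lia.
congr (_ * _ * _).
  rewrite /low_sum (sum_seqs_narrow (B' := s.+1)) => [|| v _ _].
  - by apply: eq_sum_seqs => v _ lt_v; rewrite [all _ v]lt_v mul1n.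
  - lia.
  - by case: (all _ v).
have -> : N.+2 = s.+1 + m.+1 by lia.
exact: sum_seqs_shift.
Qed.

Lemma is_parking_functionE n (p : n.-tuple 'I_n.+1) :
  is_parking_function p = parking n (map val p).
Proof.
apply/idP/idP => [/andP [/allP gt0 /forallP park] | pf_p].
  apply/parkingP; split => [|i i_in]; first by rewrite size_map size_tuple.
  have lt_i : i < n.+1 by lia.
  move/implyP: (park (Ordinal lt_i)) => /(_ (proj1 (andP i_in))) /= park_i.
  rewrite count_map (eq_in_count (a2 := fun x : 'I_n.+1 => x <= i)) // => x /gt0 /=.
  by rewrite /preim => ->.
apply/andP; split; first by have := parking_gt0 pf_p; rewrite all_map.
apply/forallP => i; apply/implyP => i_gt0.
case/parkingP: pf_p => _ /(_ i ltac:(have := ltn_ord i; lia)).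
rewrite count_map => /leq_trans; apply; apply: sub_count => x /=; rewrite /preim /=; lia.
Qed.

Lemma card_PF_first n k :
  #|[set p in PF n | pf_first p == k]| = sum_seqs n.+1 n (fun u => parking n u && (head 0 u == k)).
Proof.
rewrite -sum1_card big_mkcond /sum_seqs; apply: eq_bigr => p _.
by rewrite !inE is_parking_functionE /pf_first nth0; case: (_ && _).
Qed.

Lemma sum_seqs_head B N (w : seq nat -> bool) k : k < B ->
  sum_seqs B N.+1 (fun u => w u && (head 0 u == k)) = sum_seqs B N (fun s => w (k :: s)).
Proof.
move=> lt_kB; rewrite sum_seqsS (bigD1 (Ordinal lt_kB)) //= big1 ?addn0 => [|x ne_x].
  by apply: eq_sum_seqs => s _ _; rewrite eqxx andbT.
apply: sum_seqs_eq0 => s _ _ /=.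
by move: ne_x; rewrite -val_eqE /= => /negbTE ->; rewrite andbF.
Qed.

Theorem corollary1 (n k : nat) (hn : (1 <= n)%N) (hk1 : (1 <= k)%N) (hkn : (k <= n)%N) :
  ((#|[set p in PF n | pf_first p == k]|%:R : rat)
  = \sum_(0 <= s < (n - k).+1)
      'C(n.-1, s)%:R * ((s.+1)%:R ^ (s%:Z - 1)) * ((n - s)%:R ^ ((n - s)%:Z - 2)))%R.
Proof.
case: n hn hkn => [//|N] _ le_kN.
rewrite card_PF_first sum_seqs_head; last by lia.
rewrite (eq_sum_seqs (w2 := fun u => \sum_(t < (N.+1 - k).+1) split_parks (N - t) t u));
  last by move=> u sz lt_u; apply: parking_cons_split => //; lia.
rewrite sum_seqs_sum natr_sum big_mkord; apply: eq_bigr => -[t lt_t] _ /=.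
rewrite sum_seqs_split_parks; last by lia.
rewrite bin_sub; last by lia.
rewrite !natrM !npark_ratE mulrAC -subSn; last by lia.
congr (_ * _ ^ _ * _ ^ _)%R.
lia.
Qed.
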